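(* For $s\in\mathbb{R}$ let $\mathcal{H}_s=\{h(z)=\sum_{n\ge0}a_nz^n:\ \|h\|_s^2=\sum_{n\ge0}(1+n)^{-s}|a_n|^2<\infty\}$. The embedding dimension of $\mathcal{H}_0$ is $1$, and for every $s<0$ the embedding dimension of $\mathcal{H}_s$ is $\infty$.
   Context: $\mathcal{H}_s$ is a reproducing kernel Hilbert space of analytic functions on the unit disc $\mathbb{D}$ with kernel $k(z,w)=\sum_{n\ge0}(1+n)^s(z\bar w)^n$; for $s\le0$ it is an irreducible complete Pick space. The embedding dimension of an RKHS on $\mathbb{D}$ with kernel $k$ is the smallest $d\in\mathbb{N}\cup\{\infty\}$ for which there exist a map $b:\mathbb{D}\to\mathbb{B}_d$ (open unit ball of $\mathbb{C}^d$, with $\mathbb{C}^\infty=\ell^2(\mathbb{N})$) and a nowhere-vanishing $\delta:\mathbb{D}\to\mathbb{C}$ with $k(z,w)=\frac{\delta(z)\overline{\delta(w)}}{1-\langle b(z),b(w)\rangle}$. *)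

From Stdlib Require Import Reals.
From Coquelicot Require Import Coquelicot.
Open Scope R_scope.

Definition in_disc (z : C) : Prop := Cmod z < 1.

Definition CSeries (a : nat -> C) : C :=
  (Series (fun n => Re (a n)), Series (fun n => Im (a n))).

(* Reproducing kernel of H_s:  k_s(z,w) = sum_{n>=0} (1+n)^s (z conj w)^n. *)
Definition kern (s : R) (z w : C) : C :=
  CSeries (fun n => Cmult (RtoC (Rpower (1 + INR n) s)) (Cpow (Cmult z (Cconj w)) n)).

(* Points of the open unit ball B_d.  C^d (d : nat) is identified with the
   sequences x : nat -> C vanishing from index d on; C^oo = l^2(N) is the
   space of square-summable sequences (d = None). *)
Definition in_ball (d : option nat) (x : nat -> C) : Prop :=
  (match d with
   | Some m => forall n, (m <= n)%nat -> x n = RtoC 0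
   | None => True
   end) /\
  exists r : R, is_series (fun n => Cmod (x n) ^ 2) r /\ r < 1.

Definition cinner (x y : nat -> C) : C :=
  CSeries (fun n => Cmult (x n) (Cconj (y n))).

Definition has_embedding (s : R) (d : option nat) : Prop :=
  exists (b : C -> nat -> C) (delta : C -> C),
    (forall z, in_disc z -> in_ball d (b z)) /\
    (forall z, in_disc z -> delta z <> RtoC 0) /\
    (forall z w, in_disc z -> in_disc w ->
       kern s z w = Cdiv (Cmult (delta z) (Cconj (delta w)))
                         (Cminus (RtoC 1) (cinner (b z) (b w)))).

(* The embedding dimension of H_s equals e (Some d = finite d, None = infinity):
   the least element of N u {oo} for which an embedding exists. *)
Definition emb_dim_is (s : R) (e : option nat) : Prop :=
  match e with
  | Some d => has_embedding s (Some d) /\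
              forall d', (d' < d)%nat -> ~ has_embedding s (Some d')
  | None => has_embedding s None /\ forall d, ~ has_embedding s (Some d)
  end.

(* Write [kern s z w = K (z * conj w)] with [K t = sum_n (1+n)^s t^n].  For [s <= 0] the
   coefficients [(1+n)^s] are log-convex, so by Kaluza's lemma [1 - 1/K t = sum_n c_n t^n]
   with [c_0 = 0] and [c_n >= 0]; then [b z = (sqrt c_n z^n)_(n >= 1)] and [delta = 1] embed the
   kernel into the ball of l^2.  For [s = 0], [K t = 1/(1-t)], so [c = (0,1,0,0,...)] and the
   embedding is one-dimensional, while a zero-dimensional one would make [kern 0] of rank one.
   For [s < 0], an embedding into [C^d] makes [(x, y) |-> sum_n c_n (x y)^n] a kernel of rank
   at most [d + 2] on real points.  A power series giving such a kernel has only finitely many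
   nonzero coefficients: a linear dependence between enough of its dilates by powers of [1/2]
   yields [c_n P (2^-n) = 0] for a nonzero polynomial [P].  But [c_n] does not vanish
   eventually, because [(1+n)^s] decreases strictly while [(1+n+M)^s / (1+n)^s -> 1]. *)

From Stdlib Require Import Reals Lra Lia Psatz Classical.
From Coquelicot Require Import Coquelicot.
Open Scope R_scope.

Lemma sum_f_R0_nonneg (f : nat -> R) N :
  (forall j, (j <= N)%nat -> 0 <= f j) -> 0 <= sum_f_R0 f N.
Proof.
  intro Hf. induction N as [|N IH]; simpl; [apply Hf; lia|].
  pose proof (Hf (S N) (le_n _)). assert (0 <= sum_f_R0 f N) by (apply IH; auto). lra.
Qed.

Lemma sum_f_R0_zero_tail (u : nat -> R) d N :
  (forall n, (d < n)%nat -> u n = 0) -> (d <= N)%nat -> sum_f_R0 u N = sum_f_R0 u d.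
Proof.
  intros Hu HN. induction HN as [|N HN IH]; [reflexivity|].
  rewrite tech5, IH, Hu by lia. ring.
Qed.

Lemma Series_zero : Series (fun _ => 0) = 0.
Proof.
  rewrite (Series_ext _ (fun n => 0 * 0)) by (intro; ring).
  rewrite Series_scal_l. ring.
Qed.

Lemma ex_series_Rabs_le (u v : nat -> R) :
  (forall n, Rabs (u n) <= v n) -> ex_series v -> ex_series (fun n => Rabs (u n)).
Proof.
  intros Huv Hv. apply (ex_series_le (K := R_AbsRing) (V := R_CompleteNormedModule)) with v;
    [|exact Hv].
  intro n. change (Rabs (Rabs (u n)) <= v n). rewrite Rabs_Rabsolu. apply Huv.
Qed.

Lemma ex_series_Rabs_pseries (u : nat -> R) B x :
  (forall n, Rabs (u n) <= B) -> Rabs x < 1 -> ex_series (fun n => Rabs (u n * x ^ n)).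
Proof.
  intros Hu Hx. apply ex_series_Rabs_le with (fun n => B * Rabs x ^ n).
  - intro n. rewrite Rabs_mult, <- RPow_abs.
    apply Rmult_le_compat_r; [apply pow_le, Rabs_pos | apply Hu].
  - apply (ex_series_scal_l (K := R_AbsRing) (V := R_NormedModule)), ex_series_geom.
    rewrite Rabs_Rabsolu. exact Hx.
Qed.

Lemma is_series_finite (u : nat -> R) d :
  (forall n, (d < n)%nat -> u n = 0) -> is_series u (sum_f_R0 u d).
Proof.
  intro Hu. change (is_lim_seq (sum_n u) (sum_f_R0 u d)).
  apply (is_lim_seq_ext_loc (fun _ => sum_f_R0 u d)); [|apply is_lim_seq_const].
  exists d. intros N HN. rewrite sum_n_Reals. symmetry. apply sum_f_R0_zero_tail; assumption.
Qed.

Lemma is_series_sum_f_R0 (f : nat -> nat -> R) (l : nat -> R) N :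
  (forall j, (j <= N)%nat -> is_series (f j) (l j)) ->
  is_series (fun n => sum_f_R0 (fun j => f j n) N) (sum_f_R0 l N).
Proof.
  induction N as [|N IH]; intro Hf; [apply Hf; lia|].
  apply (is_series_plus (K := R_AbsRing) (V := R_NormedModule)); [apply IH; auto | apply Hf; lia].
Qed.

Lemma PSeries_nonneg (u : nat -> R) r : (forall n, 0 <= u n) -> 0 <= r ->
  ex_series (fun n => u n * r ^ n) -> 0 <= PSeries u r.
Proof.
  intros Hu Hr Hex. rewrite <- Series_zero. apply Series_le; [|exact Hex].
  intro n. split; [lra|]. apply Rmult_le_pos; [apply Hu | apply pow_le, Hr].
Qed.

Lemma CV_radius_pos_of_bounded (e : nat -> R) B :
  (forall n, Rabs (e n) <= B) -> Rbar_lt 0 (CV_radius e).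
Proof.
  intro HB. destruct (CV_radius_bounded e) as [Hub _].
  assert (H1 : Rbar_le 1 (CV_radius e)).
  { apply Hub. exists B. intro n. rewrite pow1, Rmult_1_r. apply HB. }
  destruct (CV_radius e) as [r| |]; simpl in *; [lra | exact I | exact H1].
Qed.

Lemma PSeries_eq_0_coef (e : nat -> R) B : (forall n, Rabs (e n) <= B) ->
  (forall x, Rabs x < 1 -> PSeries e x = 0) -> forall n, e n = 0.
Proof.
  intros HB H0 n. apply (PSeries_ext_recip e (fun _ => 0) n).
  - apply CV_radius_pos_of_bounded with B, HB.
  - apply CV_radius_pos_of_bounded with 0. intro. rewrite Rabs_R0. lra.
  - exists (mkposreal 1 Rlt_0_1). intros x Hx.
    change (Rabs (x - 0) < 1) in Hx. rewrite Rminus_0_r in Hx.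
    rewrite H0 by exact Hx. symmetry. unfold PSeries.
    rewrite (Series_ext _ (fun _ => 0)) by (intro; apply Rmult_0_l). apply Series_zero.
Qed.

Lemma Rabs_pow_le_1 y n : Rabs y <= 1 -> Rabs (y ^ n) <= 1.
Proof.
  intro Hy. rewrite <- RPow_abs, <- (pow1 n). apply pow_incr. split; [apply Rabs_pos | exact Hy].
Qed.

Lemma Rabs_sum_weighted_le (mu w : nat -> R) N : (forall j, (j <= N)%nat -> Rabs (w j) <= 1) ->
  Rabs (sum_f_R0 (fun j => mu j * w j) N) <= sum_f_R0 (fun j => Rabs (mu j)) N.
Proof.
  intro Hw. eapply Rle_trans; [apply Rabs_triang_gen|]. apply sum_Rle. intros j Hj.
  rewrite Rabs_mult. pose proof (Hw j Hj). pose proof (Rabs_pos (mu j)). nra.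
Qed.

Lemma poly_nonzero_near_0 N : forall mu : nat -> R,
  (exists j, (j <= N)%nat /\ mu j <> 0) ->
  exists eps, 0 < eps /\ forall y, 0 < y < eps -> sum_f_R0 (fun j => mu j * y ^ j) N <> 0.
Proof.
  induction N as [|N IH]; intros mu [j [Hj Hmu]].
  - exists 1. split; [lra|]. intros y _. replace j with O in Hmu by lia. simpl. lra.
  - assert (Hsplit : forall y, sum_f_R0 (fun j => mu j * y ^ j) (S N) =
        mu O + y * sum_f_R0 (fun j => mu (S j) * y ^ j) N).
    { intro y. rewrite decomp_sum by lia. simpl pred. rewrite scal_sum.
      f_equal; [ring | apply sum_eq; intros; simpl; ring]. }
    destruct (Req_dec (mu O) 0) as [H0|H0].
    + destruct j as [|j]; [contradiction|].
      destruct (IH (fun j => mu (S j))) as [eps [Heps Hne]]; [exists j; split; [lia | exact Hmu]|].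
      exists eps. split; [exact Heps|]. intros y Hy. rewrite Hsplit, H0, Rplus_0_l.
      apply Rmult_integral_contrapositive. split; [lra | apply Hne, Hy].
    + set (L := sum_f_R0 (fun j => Rabs (mu (S j))) N).
      assert (HL : 0 <= L) by (apply sum_f_R0_nonneg; intros; apply Rabs_pos).
      pose proof (Rabs_pos_lt _ H0) as Hm0.
      exists (Rmin 1 (Rabs (mu O) / (L + 1))).
      split; [apply Rmin_pos; [lra | apply Rdiv_lt_0_compat; lra]|].
      intros y [Hy0 Hy]. pose proof (Rmin_l 1 (Rabs (mu O) / (L + 1))).
      pose proof (Rmin_r 1 (Rabs (mu O) / (L + 1))).
      assert (HyL : y * (L + 1) < Rabs (mu O)).
      { apply (Rmult_lt_compat_r (L + 1)) in Hy; [|lra].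
        assert (Rabs (mu O) / (L + 1) * (L + 1) = Rabs (mu O)) by (field; lra). nra. }
      pose proof (Rabs_sum_weighted_le (fun j => mu (S j)) (fun j => y ^ j) N) as HQ.
      cbv beta in HQ. fold L in HQ.
      specialize (HQ ltac:(intros; apply Rabs_pow_le_1; rewrite Rabs_pos_eq; lra)).
      rewrite Hsplit. intro E.
      replace (mu O) with (- (y * sum_f_R0 (fun j => mu (S j) * y ^ j) N)) in HyL by lra.
      rewrite Rabs_Ropp, Rabs_mult, (Rabs_pos_eq y) in HyL by lra.
      apply (Rmult_le_compat_l y) in HQ; lra.
Qed.

Lemma Cconj_RtoC r : Cconj (RtoC r) = RtoC r.
Proof. unfold Cconj, RtoC. simpl. f_equal. ring. Qed.

Lemma Cdiv_0_r (a : C) : (a / 0)%C = 0%C.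
Proof. apply injective_projections; simpl; unfold Rdiv; ring. Qed.

Lemma Cconj_neq_0 (a : C) : a <> 0%C -> Cconj a <> 0%C.
Proof. intros Ha E. apply Ha, Cmod_eq_0. rewrite <- Cmod_conj, E. apply Cmod_0. Qed.

Lemma Rabs_Im_le_Cmod z : Rabs (Im z) <= Cmod z.
Proof.
  pose proof (Rmax_Cmod z). pose proof (Rmax_r (Rabs (Re z)) (Rabs (Im z))).
  unfold Re, Im in *. lra.
Qed.

Lemma Re_Cmult_RtoC (a : C) r : Re (a * RtoC r)%C = Re a * r.
Proof. unfold Re, Im. simpl. ring. Qed.

Lemma Im_Cmult_RtoC (a : C) r : Im (a * RtoC r)%C = Im a * r.
Proof. unfold Re, Im. simpl. ring. Qed.

Lemma Cmod_mult_conj_lt_1 z w : in_disc z -> in_disc w -> Cmod (z * Cconj w)%C < 1.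
Proof.
  unfold in_disc. intros Hz Hw. rewrite Cmod_mult, Cmod_conj.
  pose proof (Cmod_ge_0 z). pose proof (Cmod_ge_0 w). nra.
Qed.

Lemma in_disc_real x : -1 < x < 1 -> in_disc (RtoC x).
Proof. intro Hx. unfold in_disc. rewrite Cmod_R. apply Rabs_def1; lra. Qed.

Lemma Re_sum_n (f : nat -> C) n : Re (sum_n f n) = sum_f_R0 (fun k => Re (f k)) n.
Proof. induction n as [|n IH]; [now rewrite sum_O|]. rewrite sum_Sn, tech5, <- IH. reflexivity. Qed.

Lemma Im_sum_n (f : nat -> C) n : Im (sum_n f n) = sum_f_R0 (fun k => Im (f k)) n.
Proof. induction n as [|n IH]; [now rewrite sum_O|]. rewrite sum_Sn, tech5, <- IH. reflexivity. Qed.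

Lemma sum_n_RtoC (w : nat -> R) n : sum_n (fun k => RtoC (w k)) n = RtoC (sum_f_R0 w n).
Proof.
  induction n as [|n IH]; [apply sum_O|].
  rewrite sum_Sn, IH, tech5, RtoC_plus. reflexivity.
Qed.

(* Coquelicot's generic [sum_n] lemmas restated at type [C]: their goals are then equations
   in [C] rather than in the carrier of [C_AbelianMonoid], so that [ring] and [field] apply. *)
Lemma sum_nC_ext (f g : nat -> C) N :
  (forall n, (n <= N)%nat -> f n = g n) -> sum_n f N = sum_n g N.
Proof. exact (sum_n_ext_loc f g N). Qed.

Lemma sum_nC_mult_l (a : C) (f : nat -> C) N :
  sum_n (fun k => (a * f k)%C) N = (a * sum_n f N)%C.
Proof. exact (sum_n_mult_l (K := C_Ring) a f N). Qed.

Lemma sum_nC_mult_r (f : nat -> C) a n : sum_n (fun k => (f k * a)%C) n = (sum_n f n * a)%C.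
Proof. exact (sum_n_mult_r (K := C_Ring) a f n). Qed.

Lemma sum_nC_minus (f g : nat -> C) N :
  sum_n (fun k => (f k - g k)%C) N = (sum_n f N - sum_n g N)%C.
Proof.
  induction N as [|N IH]; [rewrite !sum_O; reflexivity|].
  rewrite !sum_Sn, IH. change ((sum_n f N - sum_n g N + (f (S N) - g (S N)))%C =
    (sum_n f N + f (S N) - (sum_n g N + g (S N)))%C). ring.
Qed.

Lemma sum_n_Sl {G : AbelianMonoid} (f : nat -> G) N :
  sum_n f (S N) = plus (f O) (sum_n (fun k => f (S k)) N).
Proof.
  induction N as [|N IH]; [rewrite sum_Sn, !sum_O; reflexivity|].
  rewrite sum_Sn, IH, sum_Sn, plus_assoc. reflexivity.
Qed.

Definition skip (p j : nat) : nat := if Nat.ltb j p then j else S j.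
Definition unskip (p i : nat) : nat := if Nat.ltb i p then i else pred i.

Lemma skip_neq p j : skip p j <> p.
Proof. unfold skip. destruct (Nat.ltb_spec j p); lia. Qed.

Lemma unskip_skip p j : unskip p (skip p j) = j.
Proof.
  unfold skip, unskip. destruct (Nat.ltb_spec j p) as [H|H].
  - rewrite (proj2 (Nat.ltb_lt j p) H). reflexivity.
  - destruct (Nat.ltb_spec (S j) p); [lia | reflexivity].
Qed.

Lemma sum_n_skip {G : AbelianMonoid} (f : nat -> G) p N : (p <= S N)%nat ->
  sum_n f (S N) = plus (sum_n (fun j => f (skip p j)) N) (f p).
Proof.
  revert p. induction N as [|N IH]; intros p Hp.
  - rewrite sum_Sn, !sum_O. unfold skip.
    destruct p as [|[|p]]; [simpl; apply plus_comm | reflexivity | lia].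
  - destruct (Nat.eq_dec p (S (S N))) as [->|Hne].
    + rewrite sum_Sn. f_equal. apply sum_n_ext_loc. intros i Hi. unfold skip.
      destruct (Nat.ltb_spec i (S (S N))); [reflexivity | lia].
    + rewrite sum_Sn, (IH p) by lia. rewrite sum_Sn, <- !plus_assoc. f_equal.
      replace (skip p (S N)) with (S (S N)) by (unfold skip; destruct (Nat.ltb_spec (S N) p); lia).
      apply plus_comm.
Qed.

(* [v j] is the [j]-th vector; a pivot in the last coordinate is eliminated before recursing. *)
Lemma C_linear_dependence D : forall N (v : nat -> nat -> C), (D <= N)%nat ->
  exists lam : nat -> C, (exists j, (j <= N)%nat /\ lam j <> 0%C) /\
    forall k, (k < D)%nat -> (sum_n (fun j => (lam j * v j k)%C) N : C) = 0%C.
Proof.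
  induction D as [|D IH]; intros N v HN.
  - exists (fun _ => 1%C). split; [exists O; split; [lia | apply C1_nz] | intros; lia].
  - destruct (classic (exists p, (p <= N)%nat /\ v p D <> 0%C)) as [[p [Hp Hpiv]]|Hnopiv].
    + destruct N as [|N]; [lia|].
      set (w := fun j k => (v (skip p j) k - v (skip p j) D / v p D * v p k)%C).
      destruct (IH N w ltac:(lia)) as [mu [[j1 [Hj1 Hmu]] Hw]].
      set (X := sum_n (fun j => (mu j * v (skip p j) D)%C) N).
      exists (fun i => if Nat.eqb i p then (- X / v p D)%C else mu (unskip p i)).
      assert (Hlam : forall j, (if Nat.eqb (skip p j) p then (- X / v p D)%C
                                else mu (unskip p (skip p j))) = mu j).
      { intro j. rewrite (proj2 (Nat.eqb_neq _ _) (skip_neq p j)), unskip_skip. reflexivity. }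
      split.
      * exists (skip p j1). split; [unfold skip; destruct (Nat.ltb_spec j1 p); lia|].
        rewrite Hlam. exact Hmu.
      * intros k Hk. rewrite (sum_n_skip _ p) by exact Hp. rewrite Nat.eqb_refl.
        rewrite (sum_nC_ext _ (fun j => (mu j * v (skip p j) k)%C))
          by (intros; rewrite Hlam; reflexivity).
        change (sum_n (fun j => (mu j * v (skip p j) k)%C) N + - X / v p D * v p k = 0)%C.
        destruct (Nat.eq_dec k D) as [->|HkD]; [unfold X; field; exact Hpiv|].
        specialize (Hw k ltac:(lia)). unfold w in Hw. cbv beta in Hw.
        rewrite (sum_nC_ext _
          (fun j => (mu j * v (skip p j) k - mu j * v (skip p j) D * (v p k / v p D))%C))
          in Hw by (intros; field; exact Hpiv).
        rewrite sum_nC_minus, sum_nC_mult_r in Hw. fold X in Hw.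
        set (Y := sum_n (fun j => (mu j * v (skip p j) k)%C) N) in *.
        rewrite <- Hw. field. exact Hpiv.
    + destruct (IH N v ltac:(lia)) as [lam [Hnz Hlam]].
      exists lam. split; [exact Hnz|]. intros k Hk.
      destruct (Nat.eq_dec k D) as [->|HkD]; [|apply Hlam; lia].
      rewrite (sum_nC_ext _ (fun j => (lam j * 0)%C)), sum_nC_mult_r; [ring|].
      intros j Hj. destruct (Ceq_dec (v j D) 0) as [E|E]; [rewrite E; reflexivity|].
      exfalso. apply Hnopiv. exists j. split; assumption.
Qed.

Lemma CSeries_ext (f g : nat -> C) : (forall n, f n = g n) -> CSeries f = CSeries g.
Proof. intro H. unfold CSeries. f_equal; apply Series_ext; intro n; rewrite H; reflexivity. Qed.

Lemma CSeries_incr_1_aux (f : nat -> C) : f O = 0%C -> CSeries f = CSeries (fun n => f (S n)).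
Proof.
  intro H0. unfold CSeries. f_equal; apply Series_incr_1_aux; rewrite H0; reflexivity.
Qed.

Section AbsolutelyConvergent.

Variable f : nat -> C.
Hypothesis Hf : ex_series (fun n => Cmod (f n)).

Lemma ex_series_Rabs_Re : ex_series (fun n => Rabs (Re (f n))).
Proof.
  apply ex_series_Rabs_le with (fun n => Cmod (f n)); [intro; apply re_le_Cmod | exact Hf].
Qed.

Lemma ex_series_Rabs_Im : ex_series (fun n => Rabs (Im (f n))).
Proof.
  apply ex_series_Rabs_le with (fun n => Cmod (f n)); [intro; apply Rabs_Im_le_Cmod | exact Hf].
Qed.

Lemma CSeries_incr_1 : CSeries f = (f O + CSeries (fun n => f (S n)))%C.
Proof.
  unfold CSeries. rewrite (Series_incr_1 (fun n => Re (f n))), (Series_incr_1 (fun n => Im (f n))).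
  - reflexivity.
  - apply ex_series_Rabs, ex_series_Rabs_Im.
  - apply ex_series_Rabs, ex_series_Rabs_Re.
Qed.

End AbsolutelyConvergent.

Lemma CSeries_finite (f : nat -> C) d :
  (forall n, (d < n)%nat -> f n = 0%C) -> CSeries f = sum_n f d.
Proof.
  intro Hf. unfold CSeries. apply injective_projections; cbn [fst snd];
    [change (fst (sum_n f d)) with (Re (sum_n f d)); rewrite Re_sum_n
    |change (snd (sum_n f d)) with (Im (sum_n f d)); rewrite Im_sum_n];
    apply is_series_unique, is_series_finite; intros n Hn; rewrite Hf by exact Hn; reflexivity.
Qed.

Lemma CSeries_mult (f g : nat -> C) :
  ex_series (fun n => Cmod (f n)) -> ex_series (fun n => Cmod (g n)) ->
  (CSeries f * CSeries g)%C = CSeries (fun n => sum_n (fun k => f k * g (n - k)%nat)%C n).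
Proof.
  intros Hf Hg.
  assert (Hmult : forall u v : nat -> R,
    ex_series (fun n => Rabs (u n)) -> ex_series (fun n => Rabs (v n)) ->
    is_series (fun n => sum_f_R0 (fun k => u k * v (n - k)%nat) n) (Series u * Series v)).
  { intros u v Hu Hv.
    apply is_series_mult; try assumption; apply Series_correct, ex_series_Rabs; assumption. }
  pose proof (ex_series_Rabs_Re f Hf). pose proof (ex_series_Rabs_Im f Hf).
  pose proof (ex_series_Rabs_Re g Hg). pose proof (ex_series_Rabs_Im g Hg).
  unfold CSeries. apply injective_projections; cbn -[Series sum_n];
    symmetry; apply is_series_unique.
  - eapply is_series_ext;
      [|apply (is_series_minus (K := R_AbsRing) (V := R_NormedModule)); apply Hmult; assumption].
    intro n. rewrite Re_sum_n. change (plus ?x (opp ?y)) with (x - y). rewrite <- minus_sum.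
    apply sum_eq. intros. reflexivity.
  - eapply is_series_ext;
      [|apply (is_series_plus (K := R_AbsRing) (V := R_NormedModule)); apply Hmult; assumption].
    intro n. rewrite Im_sum_n. change (plus ?x ?y) with (x + y). rewrite <- plus_sum.
    apply sum_eq. intros. reflexivity.
Qed.

Definition CPSeries (u : nat -> R) (t : C) : C := CSeries (fun n => (RtoC (u n) * t ^ n)%C).

Lemma ex_series_Cmod_CPSeries (u : nat -> R) B t :
  (forall n, Rabs (u n) <= B) -> Cmod t < 1 ->
  ex_series (fun n => Cmod (RtoC (u n) * t ^ n)%C).
Proof.
  intros Hu Ht. apply ex_series_Rabs.
  apply (ex_series_ext (fun n => Rabs (u n * Cmod t ^ n))).
  - intro n. rewrite Cmod_mult, Cmod_R, Cmod_pow, Rabs_mult, (Rabs_pos_eq (Cmod t ^ n)).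
    + symmetry. apply Rabs_pos_eq, Rmult_le_pos; [apply Rabs_pos | apply pow_le, Cmod_ge_0].
    + apply pow_le, Cmod_ge_0.
  - apply ex_series_Rabs_pseries with B; [exact Hu|].
    rewrite Rabs_pos_eq by apply Cmod_ge_0. exact Ht.
Qed.

Lemma CPSeries_mult (u v : nat -> R) B t :
  (forall n, Rabs (u n) <= B) -> (forall n, Rabs (v n) <= B) -> Cmod t < 1 ->
  (CPSeries u t * CPSeries v t)%C = CPSeries (fun n => sum_f_R0 (fun k => u k * v (n - k)%nat) n) t.
Proof.
  intros Hu Hv Ht. unfold CPSeries.
  rewrite CSeries_mult by (eapply ex_series_Cmod_CPSeries; eassumption).
  apply CSeries_ext. intro n. rewrite <- sum_n_RtoC.
  rewrite <- sum_nC_mult_r. apply sum_nC_ext. intros k Hk.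
  replace (t ^ n)%C with (t ^ k * t ^ (n - k))%C by (rewrite <- Cpow_add_r; f_equal; lia).
  rewrite RtoC_mult. ring.
Qed.

Lemma CPSeries_real (u : nat -> R) r : CPSeries u (RtoC r) = RtoC (PSeries u r).
Proof.
  unfold CPSeries. rewrite (CSeries_ext _ (fun n => RtoC (u n * r ^ n)))
    by (intro; rewrite RtoC_mult, RtoC_pow; reflexivity).
  unfold CSeries. simpl. rewrite Series_zero. reflexivity.
Qed.

(** * The coefficients of [K] and of [1 - 1/K] *)

Definition kcoef (s : R) (n : nat) : R := Rpower (1 + INR n) s.

(* [ccoef s] is the coefficient sequence of [1 - 1/K] for [K t = sum_n kcoef s n t^n]:
   [ccoef s 0 = 0] and [kcoef s n = sum_(j <= n) ccoef s j * kcoef s (n - j)] for [n >= 1].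
   [cpref s n] agrees with [ccoef s] on [0 .. n]. *)
Fixpoint cpref (s : R) (n : nat) : nat -> R :=
  match n with
  | O => fun _ => 0
  | S m => fun k =>
      if Nat.eqb k (S m)
      then kcoef s (S m) - sum_f_R0 (fun j => cpref s m j * kcoef s (S m - j)) m
      else cpref s m k
  end.

Definition ccoef (s : R) (n : nat) : R := cpref s n n.

Lemma cpref_ccoef s m k : (k <= m)%nat -> cpref s m k = ccoef s k.
Proof.
  induction m as [|m IH]; intro Hk.
  - replace k with 0%nat by lia. reflexivity.
  - destruct (Nat.eq_dec k (S m)) as [->|Hne]; [reflexivity|].
    simpl. rewrite (proj2 (Nat.eqb_neq k (S m)) Hne). apply IH. lia.
Qed.

Lemma ccoef0 s : ccoef s 0 = 0.
Proof. reflexivity. Qed.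

Lemma ccoefS s m :
  ccoef s (S m) = kcoef s (S m) - sum_f_R0 (fun j => ccoef s j * kcoef s (S m - j)) m.
Proof.
  unfold ccoef at 1. simpl. rewrite Nat.eqb_refl. f_equal.
  apply sum_eq. intros j Hj. rewrite cpref_ccoef by lia. reflexivity.
Qed.

Lemma kcoef0 s : kcoef s 0 = 1.
Proof.
  unfold kcoef, Rpower. simpl. replace (1 + 0) with 1 by ring.
  rewrite ln_1, Rmult_0_r. apply exp_0.
Qed.

Lemma kcoef_pos s n : 0 < kcoef s n.
Proof. apply exp_pos. Qed.

Lemma kcoef_conv s n : (1 <= n)%nat ->
  kcoef s n = sum_f_R0 (fun j => ccoef s j * kcoef s (n - j)) n.
Proof.
  intro Hn. destruct n as [|m]; [lia|].
  rewrite tech5, Nat.sub_diag, kcoef0, ccoefS. ring.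
Qed.

Lemma INR_succ_pos n : 0 < 1 + INR n.
Proof. pose proof (pos_INR n). lra. Qed.

Lemma Rpower_le_base_nonpos x y s : 0 < x <= y -> s <= 0 -> Rpower y s <= Rpower x s.
Proof.
  intros Hxy Hs. rewrite <- (Ropp_involutive s), (Rpower_Ropp y (- s)), (Rpower_Ropp x (- s)).
  apply Rinv_le_contravar; [apply exp_pos|]. apply Rle_Rpower_l; lra.
Qed.

Lemma Rpower_lt_base_neg x y s : 0 < x < y -> s < 0 -> Rpower y s < Rpower x s.
Proof.
  intros Hxy Hs. rewrite <- (Ropp_involutive s), (Rpower_Ropp y (- s)), (Rpower_Ropp x (- s)).
  apply Rinv_lt_contravar; [apply Rmult_lt_0_compat; apply exp_pos|].
  apply Rlt_Rpower_l; lra.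
Qed.

Lemma kcoef_antitone s i j : s <= 0 -> (i <= j)%nat -> kcoef s j <= kcoef s i.
Proof.
  intros Hs Hij. apply Rpower_le_base_nonpos; [|exact Hs].
  apply le_INR in Hij. pose proof (pos_INR i). lra.
Qed.

Lemma kcoef_le_1 s n : s <= 0 -> kcoef s n <= 1.
Proof. intro Hs. rewrite <- (kcoef0 s). apply kcoef_antitone; [exact Hs | lia]. Qed.

Lemma kcoef_decr s n : s < 0 -> kcoef s (S n) < kcoef s n.
Proof.
  intro Hs. apply Rpower_lt_base_neg; [|exact Hs].
  rewrite S_INR. pose proof (pos_INR n). lra.
Qed.

Lemma kcoef_log_convex s m n : s <= 0 -> (m <= n)%nat ->
  kcoef s (S m) * kcoef s n <= kcoef s (S n) * kcoef s m.
Proof.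
  intros Hs Hmn. unfold kcoef. rewrite !S_INR.
  pose proof (pos_INR m). pose proof (pos_INR n). apply le_INR in Hmn.
  rewrite !Rpower_mult_distr by lra.
  apply Rpower_le_base_nonpos; [split|exact Hs]; nra.
Qed.

(* Kaluza's lemma: [ccoef s (S m) * kcoef s m] expands into a combination of
   log-convexity defects of [kcoef s] with the earlier coefficients as weights. *)
Lemma ccoef_nonneg s n : s <= 0 -> 0 <= ccoef s n.
Proof.
  intro Hs. induction n as [n IH] using (well_founded_induction Wf_nat.lt_wf).
  destruct n as [|m]; [rewrite ccoef0; lra|].
  destruct m as [|m'].
  - rewrite ccoefS. simpl. rewrite ccoef0. pose proof (kcoef_pos s 1). lra.
  - set (m := S m') in *.
    assert (Hexp : ccoef s (S m) * kcoef s m =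
      sum_f_R0 (fun j => ccoef s j *
        (kcoef s (S m) * kcoef s (m - j) - kcoef s (S m - j) * kcoef s m)) m).
    { rewrite ccoefS, Rmult_minus_distr_r, (kcoef_conv s m) at 1 by (unfold m; lia).
      rewrite scal_sum, Rmult_comm, scal_sum, <- minus_sum.
      apply sum_eq. intros j Hj. ring. }
    apply (Rmult_le_reg_r (kcoef s m)); [apply kcoef_pos|].
    rewrite Rmult_0_l, Hexp. apply sum_f_R0_nonneg. intros j Hj.
    apply Rmult_le_pos; [apply IH; lia|].
    rewrite (Nat.sub_succ_l j m Hj).
    pose proof (kcoef_log_convex s (m - j) m Hs ltac:(lia)). lra.
Qed.

Lemma ccoef_le_kcoef s n : s <= 0 -> ccoef s n <= kcoef s n.
Proof.
  intro Hs. destruct n as [|m]; [rewrite ccoef0; left; apply kcoef_pos|].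
  rewrite ccoefS. enough (0 <= sum_f_R0 (fun j => ccoef s j * kcoef s (S m - j)) m) by lra.
  apply sum_f_R0_nonneg. intros j _.
  apply Rmult_le_pos; [apply ccoef_nonneg, Hs | left; apply kcoef_pos].
Qed.

Lemma Rabs_ccoef_le_1 s n : s <= 0 -> Rabs (ccoef s n) <= 1.
Proof.
  intro Hs. rewrite Rabs_pos_eq by (apply ccoef_nonneg, Hs).
  pose proof (ccoef_le_kcoef s n Hs). pose proof (kcoef_le_1 s n Hs). lra.
Qed.

Lemma Rabs_kcoef_le_1 s n : s <= 0 -> Rabs (kcoef s n) <= 1.
Proof. intro Hs. rewrite Rabs_pos_eq by (left; apply kcoef_pos). apply kcoef_le_1, Hs. Qed.

Lemma kcoef_shift_lower s m M : s <= 0 ->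
  (1 + s * INR M / (1 + INR m)) * kcoef s m <= kcoef s (m + M).
Proof.
  intro Hs. pose proof (INR_succ_pos m) as Hm. pose proof (pos_INR M).
  set (q := (1 + INR (m + M)) / (1 + INR m)).
  assert (Hq : 0 < q) by (apply Rdiv_lt_0_compat; apply INR_succ_pos).
  assert (Hsplit : kcoef s (m + M) = kcoef s m * Rpower q s).
  { unfold kcoef. rewrite Rpower_mult_distr by assumption. f_equal. unfold q. field. lra. }
  assert (Hln : ln q <= INR M / (1 + INR m)).
  { pose proof (exp_ineq1_le (ln q)). rewrite exp_ln in H0 by exact Hq.
    enough (q - 1 = INR M / (1 + INR m)) by lra. unfold q. rewrite plus_INR. field. lra. }
  rewrite Hsplit, Rmult_comm. apply Rmult_le_compat_l; [left; apply kcoef_pos|].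
  eapply Rle_trans; [|apply exp_ineq1_le].
  enough (s * (INR M / (1 + INR m)) <= s * ln q) by (unfold Rdiv in *; lra).
  apply Rmult_le_compat_neg_l; assumption.
Qed.

Lemma kcoef_bounds_of_finite_ccoef s M n : s <= 0 ->
  (forall j, (M < j)%nat -> ccoef s j = 0) -> (M < n)%nat ->
  sum_f_R0 (ccoef s) M * kcoef s (n - 1) <= kcoef s n <=
  sum_f_R0 (ccoef s) M * kcoef s (n - M).
Proof.
  intros Hs Hc Hn.
  assert (Hconv : kcoef s n = sum_f_R0 (fun j => ccoef s j * kcoef s (n - j)) M).
  { rewrite kcoef_conv by lia. apply sum_f_R0_zero_tail; [|lia].
    intros j Hj. rewrite Hc by exact Hj. ring. }
  rewrite Hconv, !(Rmult_comm (sum_f_R0 _ _)), !scal_sum. split; apply sum_Rle; intros [|j] Hj;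
    try (rewrite ccoef0; lra);
    (apply Rmult_le_compat_l; [apply ccoef_nonneg, Hs | apply kcoef_antitone; [exact Hs | lia]]).
Qed.

(* If [ccoef s] vanished beyond [M], then with [sigma = sum_(j <= M) ccoef s j] the strict
   decrease of [kcoef s] would force [sigma < 1], while [kcoef s (m + M) / kcoef s m -> 1]
   would force [sigma >= 1]. *)
Lemma ccoef_not_eventually_zero s : s < 0 ->
  ~ (exists M, forall n, (M <= n)%nat -> ccoef s n = 0).
Proof.
  intros Hs [M HM]. assert (Hs' : s <= 0) by lra.
  set (sigma := sum_f_R0 (ccoef s) M).
  assert (Hb : forall n, (M < n)%nat ->
    sigma * kcoef s (n - 1) <= kcoef s n <= sigma * kcoef s (n - M)).
  { intros n Hn. apply kcoef_bounds_of_finite_ccoef; auto. intros j Hj. apply HM. lia. }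
  assert (HS : sigma < 1).
  { destruct (Hb (S M) (Nat.lt_succ_diag_r M)) as [Hlow _].
    replace (S M - 1)%nat with M in Hlow by lia.
    pose proof (kcoef_decr s M Hs). pose proof (kcoef_pos s M).
    apply (Rmult_lt_reg_r (kcoef s M)); lra. }
  assert (Hge : forall m, (1 <= m)%nat -> 1 + s * INR M / (1 + INR m) <= sigma).
  { intros m Hm. destruct (Hb (m + M)%nat ltac:(lia)) as [_ Hup].
    replace (m + M - M)%nat with m in Hup by lia.
    pose proof (kcoef_shift_lower s m M Hs'). pose proof (kcoef_pos s m).
    apply (Rmult_le_reg_r (kcoef s m)); lra. }
  destruct (INR_unbounded (- s * INR M / (1 - sigma))) as [k Hk].
  specialize (Hge (S k) ltac:(lia)). rewrite S_INR in Hge.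
  pose proof (pos_INR k).
  assert (- s * INR M < (1 - sigma) * (1 + (INR k + 1))).
  { apply Rgt_lt in Hk. apply (Rmult_lt_compat_l (1 - sigma)) in Hk; [|lra].
    replace ((1 - sigma) * (- s * INR M / (1 - sigma))) with (- s * INR M) in Hk by (field; lra).
    nra. }
  assert (s * INR M / (1 + (INR k + 1)) * (1 + (INR k + 1)) = s * INR M) by (field; lra).
  nra.
Qed.

(** * An embedding into the ball of l^2 for [s <= 0] *)

Lemma kern_CPSeries s z w : kern s z w = CPSeries (kcoef s) (z * Cconj w)%C.
Proof. reflexivity. Qed.

Lemma kern_real s x y : kern s (RtoC x) (RtoC y) = RtoC (PSeries (kcoef s) (x * y)).
Proof. rewrite kern_CPSeries, Cconj_RtoC, <- RtoC_mult. apply CPSeries_real. Qed.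

Lemma CPSeries_kcoef_mul_one_sub_ccoef s t : s <= 0 -> Cmod t < 1 ->
  (CPSeries (kcoef s) t * (1 - CPSeries (ccoef s) t))%C = 1%C.
Proof.
  intros Hs Ht.
  (* The Cauchy product of [ccoef s] and [kcoef s] is [kcoef s] with its constant term removed. *)
  assert (Hprod : (CPSeries (ccoef s) t * CPSeries (kcoef s) t)%C = (CPSeries (kcoef s) t - 1)%C).
  { rewrite (CPSeries_mult _ _ 1) by (auto using Rabs_ccoef_le_1, Rabs_kcoef_le_1).
    unfold CPSeries.
    rewrite CSeries_incr_1_aux by (cbn [sum_f_R0]; rewrite ccoef0, Rmult_0_l; ring).
    rewrite (CSeries_incr_1 (fun n => (RtoC (kcoef s n) * t ^ n)%C))
      by (apply ex_series_Cmod_CPSeries with 1; auto using Rabs_kcoef_le_1).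
    rewrite (CSeries_ext _ (fun n => (RtoC (kcoef s (S n)) * t ^ S n)%C))
      by (intro; rewrite <- kcoef_conv by lia; reflexivity).
    rewrite kcoef0. change (Cpow t 0) with (RtoC 1). ring. }
  transitivity (CPSeries (kcoef s) t - CPSeries (ccoef s) t * CPSeries (kcoef s) t)%C; [ring|].
  rewrite Hprod. ring.
Qed.

Lemma PSeries_ccoef_lt_1 s r : s <= 0 -> 0 <= r < 1 -> PSeries (ccoef s) r < 1.
Proof.
  intros Hs Hr.
  assert (Hr' : Cmod (RtoC r) < 1) by (rewrite Cmod_R, Rabs_pos_eq; lra).
  pose proof (CPSeries_kcoef_mul_one_sub_ccoef s _ Hs Hr') as Hid.
  rewrite !CPSeries_real, <- RtoC_minus, <- RtoC_mult in Hid. apply RtoC_inj in Hid.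
  assert (HK : 0 <= PSeries (kcoef s) r).
  { apply PSeries_nonneg; [intro; left; apply kcoef_pos | lra |].
    apply ex_series_Rabs, ex_series_Rabs_pseries with 1;
      [intro; apply Rabs_kcoef_le_1, Hs | rewrite Rabs_pos_eq; lra]. }
  nra.
Qed.

Definition l2_emb (s : R) (z : C) (n : nat) : C := (RtoC (sqrt (ccoef s (S n))) * z ^ S n)%C.

Lemma cinner_l2_emb s z w : s <= 0 ->
  cinner (l2_emb s z) (l2_emb s w) = CPSeries (ccoef s) (z * Cconj w)%C.
Proof.
  intro Hs. unfold CPSeries. rewrite CSeries_incr_1_aux by (rewrite ccoef0; ring).
  apply CSeries_ext. intro n. unfold l2_emb.
  rewrite Cmult_conj, Cconj_RtoC, Cpow_conj, Cpow_mult_l.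
  replace (RtoC (ccoef s (S n))) with (RtoC (sqrt (ccoef s (S n))) * RtoC (sqrt (ccoef s (S n))))%C
    by (rewrite <- RtoC_mult, sqrt_sqrt by (apply ccoef_nonneg, Hs); reflexivity).
  ring.
Qed.

Lemma is_series_Cmod_l2_emb s z : s <= 0 -> in_disc z ->
  is_series (fun n => Cmod (l2_emb s z n) ^ 2) (PSeries (ccoef s) (Cmod z ^ 2)).
Proof.
  intros Hs Hz. unfold PSeries. rewrite Series_incr_1_aux by (rewrite ccoef0; ring).
  apply (is_series_ext (fun n => ccoef s (S n) * (Cmod z ^ 2) ^ S n)).
  { intro n. unfold l2_emb. rewrite Cmod_mult, Cmod_R, Cmod_pow, Rabs_pos_eq by apply sqrt_pos.
    rewrite Rpow_mult_distr, <- !pow_mult, pow2_sqrt by (apply ccoef_nonneg, Hs).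
    f_equal. f_equal. lia. }
  apply Series_correct, (ex_series_incr_1 (fun n => ccoef s n * (Cmod z ^ 2) ^ n)).
  apply ex_series_Rabs, ex_series_Rabs_pseries with 1; [intro; apply Rabs_ccoef_le_1, Hs|].
  unfold in_disc in Hz. pose proof (Cmod_ge_0 z). rewrite Rabs_pos_eq; nra.
Qed.

Lemma l2_emb_in_ball s z : s <= 0 -> in_disc z ->
  exists r, is_series (fun n => Cmod (l2_emb s z n) ^ 2) r /\ r < 1.
Proof.
  intros Hs Hz. exists (PSeries (ccoef s) (Cmod z ^ 2)).
  split; [apply is_series_Cmod_l2_emb; assumption|].
  unfold in_disc in Hz. pose proof (Cmod_ge_0 z). apply PSeries_ccoef_lt_1; [exact Hs | nra].
Qed.

Lemma kern_l2_emb s z w : s <= 0 -> in_disc z -> in_disc w ->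
  kern s z w =
  Cdiv (Cmult (RtoC 1) (Cconj (RtoC 1))) (Cminus (RtoC 1) (cinner (l2_emb s z) (l2_emb s w))).
Proof.
  intros Hs Hz Hw. rewrite kern_CPSeries, cinner_l2_emb, Cconj_RtoC by exact Hs.
  pose proof (CPSeries_kcoef_mul_one_sub_ccoef s _ Hs (Cmod_mult_conj_lt_1 z w Hz Hw)) as Hid.
  set (K := CPSeries (kcoef s) _) in *. set (Q := (1 - CPSeries (ccoef s) _)%C) in *.
  assert (HQ : Q <> 0%C) by (intro E; rewrite E, Cmult_0_r in Hid; apply C1_nz, eq_sym, Hid).
  replace (RtoC 1 * RtoC 1)%C with (K * Q)%C by (rewrite Hid; ring). field. exact HQ.
Qed.

Lemma has_embedding_l2 s : s <= 0 -> has_embedding s None.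
Proof.
  intro Hs. exists (l2_emb s), (fun _ => RtoC 1). split; [|split].
  - intros z Hz. split; [exact I | apply l2_emb_in_ball; assumption].
  - intros. apply C1_nz.
  - intros. apply kern_l2_emb; assumption.
Qed.

(** * The case [s = 0] *)

Lemma kcoef_exponent0 n : kcoef 0 n = 1.
Proof. apply Rpower_O, INR_succ_pos. Qed.

Lemma ccoef_exponent0_ge_2 n : (2 <= n)%nat -> ccoef 0 n = 0.
Proof.
  assert (Hrec : forall m, ccoef 0 (S m) = 1 - sum_f_R0 (ccoef 0) m).
  { intro m. rewrite ccoefS, kcoef_exponent0. f_equal.
    apply sum_eq. intros. rewrite kcoef_exponent0. ring. }
  assert (Hsum : forall m, sum_f_R0 (ccoef 0) (S m) = 1).
  { intro m. rewrite tech5, Hrec. ring. }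
  intro Hn. destruct n as [|[|m]]; [lia | lia |]. rewrite Hrec, Hsum. ring.
Qed.

Lemma has_embedding_0_1 : has_embedding 0 (Some 1%nat).
Proof.
  exists (l2_emb 0), (fun _ => RtoC 1). split; [|split].
  - intros z Hz. split; [|apply l2_emb_in_ball; [lra | exact Hz]].
    intros n Hn. unfold l2_emb. rewrite ccoef_exponent0_ge_2, sqrt_0 by lia. ring.
  - intros. apply C1_nz.
  - intros. apply kern_l2_emb; [lra | assumption..].
Qed.

Lemma PSeries_kcoef_exponent0 r : Rabs r < 1 -> PSeries (kcoef 0) r = / (1 - r).
Proof.
  intro Hr. apply is_series_unique.
  apply (is_series_ext (fun n => r ^ n)); [|apply is_series_geom, Hr].
  intro. rewrite kcoef_exponent0, Rmult_1_l. reflexivity.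
Qed.

(* A zero-dimensional embedding would make [kern 0] of rank one; test it at [0] and [1/2]. *)
Lemma no_embedding_0_0 : ~ has_embedding 0 (Some 0%nat).
Proof.
  intros [b [delta [Hb [_ Hk]]]].
  assert (Hrank1 : forall x y, -1 < x < 1 -> -1 < y < 1 ->
    RtoC (PSeries (kcoef 0) (x * y)) = (delta (RtoC x) * Cconj (delta (RtoC y)))%C).
  { intros x y Hx Hy. apply in_disc_real in Hx, Hy.
    rewrite <- kern_real, Hk by assumption.
    unfold cinner. rewrite (CSeries_finite _ 0) by (intros; rewrite (proj1 (Hb _ Hx)) by lia; ring).
    rewrite sum_O, (proj1 (Hb _ Hx)) by lia. field. }
  pose proof (Hrank1 0 0 ltac:(lra) ltac:(lra)) as H00.
  pose proof (Hrank1 (1/2) 0 ltac:(lra) ltac:(lra)) as Hh0.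
  pose proof (Hrank1 (1/2) (1/2) ltac:(lra) ltac:(lra)) as Hhh.
  rewrite Rmult_0_r, PSeries_0, kcoef0 in H00, Hh0.
  rewrite PSeries_kcoef_exponent0 in Hhh by (rewrite Rabs_pos_eq; lra).
  set (p := delta (RtoC 0)) in *. set (q := delta (RtoC (1/2))) in *.
  assert (Hqp : q = p).
  { transitivity (q * (p * Cconj p))%C; [rewrite <- H00; ring|].
    transitivity (p * (q * Cconj p))%C; [ring|]. rewrite <- Hh0. ring. }
  rewrite Hqp, <- H00 in Hhh. apply RtoC_inj in Hhh. lra.
Qed.

Lemma emb_dim_is_0_1 : emb_dim_is 0 (Some 1%nat).
Proof.
  split; [exact has_embedding_0_1|].
  intros d Hd. replace d with 0%nat by lia. exact no_embedding_0_0.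
Qed.

(** * Power series kernels of finite rank *)

Lemma sum_PSeries_dilates (e : nat -> R) B (mu y : nat -> R) N x :
  (forall n, Rabs (e n) <= B) -> Rabs x < 1 -> (forall j, (j <= N)%nat -> Rabs (y j) <= 1) ->
  sum_f_R0 (fun j => mu j * PSeries e (x * y j)) N =
  PSeries (fun n => e n * sum_f_R0 (fun j => mu j * y j ^ n) N) x.
Proof.
  intros HB Hx Hy. symmetry. apply is_series_unique.
  apply (is_series_ext (fun n => sum_f_R0 (fun j => mu j * (e n * (x * y j) ^ n)) N)).
  { intro n. rewrite Rmult_comm, scal_sum, scal_sum.
    apply sum_eq. intros. rewrite Rpow_mult_distr. ring. }
  apply is_series_sum_f_R0. intros j Hj.
  apply (is_series_scal (K := R_AbsRing) (V := R_NormedModule)), Series_correct, ex_series_Rabs.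
  apply ex_series_Rabs_pseries with B; [exact HB|].
  rewrite Rabs_mult. pose proof (Hy j Hj). pose proof (Rabs_pos x). pose proof (Rabs_pos (y j)).
  nra.
Qed.

Lemma dilates_dependence_coef (e : nat -> R) B (mu y : nat -> R) N :
  (forall n, Rabs (e n) <= B) -> (forall j, (j <= N)%nat -> Rabs (y j) <= 1) ->
  (forall x, -1 < x < 1 -> sum_f_R0 (fun j => mu j * PSeries e (x * y j)) N = 0) ->
  forall n, e n * sum_f_R0 (fun j => mu j * y j ^ n) N = 0.
Proof.
  intros HB Hy Hdep. apply (PSeries_eq_0_coef _ (B * sum_f_R0 (fun j => Rabs (mu j)) N)).
  - intro n. rewrite Rabs_mult.
    apply Rmult_le_compat; [apply Rabs_pos | apply Rabs_pos | apply HB |].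
    apply Rabs_sum_weighted_le. intros j Hj. apply Rabs_pow_le_1, Hy, Hj.
  - intros x Hx. rewrite <- (sum_PSeries_dilates _ B) by assumption.
    apply Hdep. apply Rabs_def2 in Hx. lra.
Qed.

Section FiniteRank.

Variables (e : nat -> R) (D : nat) (F G : nat -> R -> C).
Hypothesis Hrank : forall x y, -1 < x < 1 -> -1 < y < 1 ->
  RtoC (PSeries e (x * y)) = sum_n (fun k => (F k x * G k y)%C) D.

Lemma finite_rank_dilates_dependent (y : nat -> R) :
  (forall j, (j <= S D)%nat -> -1 < y j < 1) ->
  exists mu : nat -> R, (exists j, (j <= S D)%nat /\ mu j <> 0) /\
    forall x, -1 < x < 1 -> sum_f_R0 (fun j => mu j * PSeries e (x * y j)) (S D) = 0.
Proof.
  intro Hy.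
  destruct (C_linear_dependence (S D) (S D) (fun j k => G k (y j)) (le_n _))
    as [lam [[j0 [Hj0 Hlam0]] Hlam]].
  assert (Hcomb : forall x, -1 < x < 1 ->
    (sum_n (fun j => (lam j * RtoC (PSeries e (x * y j)))%C) (S D) : C) = 0%C).
  { intros x Hx.
    rewrite (sum_nC_ext _ (fun j => sum_n (fun k => (F k x * (lam j * G k (y j)))%C) D)).
    2:{ intros j Hj. rewrite Hrank by auto. rewrite <- sum_nC_mult_l.
        apply sum_nC_ext. intros. ring. }
    rewrite sum_n_switch.
    rewrite (sum_nC_ext _ (fun k => (F k x * 0)%C)), sum_nC_mult_r; [ring|].
    intros k Hk. rewrite sum_nC_mult_l, Hlam by lia. reflexivity. }
  assert (HRe : forall x, -1 < x < 1 ->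
    sum_f_R0 (fun j => Re (lam j) * PSeries e (x * y j)) (S D) = 0).
  { intros x Hx.
    rewrite <- (sum_eq (fun j => Re (lam j * RtoC (PSeries e (x * y j)))%C))
      by (intros; apply Re_Cmult_RtoC).
    rewrite <- Re_sum_n, Hcomb by exact Hx. reflexivity. }
  assert (HIm : forall x, -1 < x < 1 ->
    sum_f_R0 (fun j => Im (lam j) * PSeries e (x * y j)) (S D) = 0).
  { intros x Hx.
    rewrite <- (sum_eq (fun j => Im (lam j * RtoC (PSeries e (x * y j)))%C))
      by (intros; apply Im_Cmult_RtoC).
    rewrite <- Im_sum_n, Hcomb by exact Hx. reflexivity. }
  destruct (Req_dec (Re (lam j0)) 0) as [Hre0|Hre0];
    [destruct (Req_dec (Im (lam j0)) 0) as [Him0|Him0]|].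
  - exfalso. apply Hlam0. apply injective_projections; assumption.
  - exists (fun j => Im (lam j)). split; [exists j0; split; assumption | exact HIm].
  - exists (fun j => Re (lam j)). split; [exists j0; split; assumption | exact HRe].
Qed.

Variable B : R.
Hypothesis He : forall n, Rabs (e n) <= B.

(* The dependence between the dilates [x / 2^(j+1)] gives
   [e n * 2^(-n) * P (2^(-n)) = 0] for a nonzero polynomial [P]. *)
Lemma finite_rank_eventually_zero : exists M, forall n, (M <= n)%nat -> e n = 0.
Proof.
  set (y := fun j : nat => (1/2) ^ S j).
  assert (Hy : forall j, 0 < y j <= 1/2).
  { intro j. unfold y. simpl. pose proof (pow_lt (1/2) j ltac:(lra)).
    pose proof (pow_incr (1/2) 1 j ltac:(lra)). rewrite pow1 in *. nra. }
  destruct (finite_rank_dilates_dependent y) as [mu [Hmu Hdep]];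
    [intros j _; specialize (Hy j); lra|].
  pose proof (dilates_dependence_coef e B mu y (S D) He) as Hcoef.
  specialize (Hcoef ltac:(intros j _; specialize (Hy j); rewrite Rabs_pos_eq; lra) Hdep).
  set (P := fun z => sum_f_R0 (fun j => mu j * z ^ j) (S D)).
  assert (HP : forall n, sum_f_R0 (fun j => mu j * y j ^ n) (S D) = (1/2) ^ n * P ((1/2) ^ n)).
  { intro n. unfold P. rewrite scal_sum. apply sum_eq. intros j _. unfold y.
    rewrite <- !pow_mult. replace (S j * n)%nat with (n + n * j)%nat by lia.
    rewrite pow_add. ring. }
  destruct (poly_nonzero_near_0 (S D) mu Hmu) as [eps [Heps Hne]].
  destruct (pow_lt_1_zero (1/2) ltac:(rewrite Rabs_pos_eq; lra) eps Heps) as [M HM].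
  exists M. intros n Hn. specialize (Hcoef n). rewrite HP in Hcoef. specialize (HM n Hn).
  assert (Hh : 0 < (1/2) ^ n) by (apply pow_lt; lra). rewrite Rabs_pos_eq in HM by lra.
  specialize (Hne ((1/2) ^ n) (conj Hh HM)). fold P in Hne.
  apply Rmult_integral in Hcoef. destruct Hcoef as [He0|Hz]; [exact He0|].
  apply Rmult_integral in Hz. destruct Hz; [lra | contradiction].
Qed.

End FiniteRank.

(** * No finite-dimensional embedding for [s < 0] *)

Section FiniteEmbedding.

Variables (s : R) (d : nat) (b : C -> nat -> C) (delta : C -> C).
Hypothesis Hs : s <= 0.
Hypothesis Hb : forall z, in_disc z -> in_ball (Some d) (b z).
Hypothesis Hdelta : forall z, in_disc z -> delta z <> RtoC 0.
Hypothesis Hk : forall z w, in_disc z -> in_disc w ->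
  kern s z w = Cdiv (Cmult (delta z) (Cconj (delta w))) (Cminus (RtoC 1) (cinner (b z) (b w))).

(* Rank-one factors of [ccoef s (x y) = 1 - (1 - <b x, b y>) / (delta x conj (delta y))]. *)
Definition lfactor (k : nat) (x : R) : C :=
  match k with O => 1%C | 1 => (/ delta x)%C | S (S n) => (b x n / delta x)%C end.
Definition rfactor (k : nat) (y : R) : C :=
  match k with O => 1%C | 1 => (- Cconj (/ delta y))%C | S (S n) => Cconj (b y n / delta y) end.

Lemma PSeries_ccoef_finite_rank x y : -1 < x < 1 -> -1 < y < 1 ->
  RtoC (PSeries (ccoef s) (x * y)) = sum_n (fun k => (lfactor k x * rfactor k y)%C) (S (S d)).
Proof.
  intros Hx Hy. apply in_disc_real in Hx, Hy.
  assert (Hxy : Cmod (RtoC (x * y)) < 1)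
    by (rewrite RtoC_mult, <- (Cconj_RtoC y); apply Cmod_mult_conj_lt_1; assumption).
  pose proof (CPSeries_kcoef_mul_one_sub_ccoef s _ Hs Hxy) as Hid.
  rewrite !CPSeries_real, <- kern_real, Hk in Hid by assumption.
  set (P := (delta x * Cconj (delta y))%C) in Hid.
  set (Q := (1 - cinner (b x) (b y))%C) in Hid.
  set (Cxy := RtoC (PSeries (ccoef s) (x * y))) in *.
  assert (HP : P <> 0%C) by (apply Cmult_neq_0; [|apply Cconj_neq_0]; apply Hdelta; assumption).
  assert (HQ : Q <> 0%C)
    by (intro E; rewrite E, Cdiv_0_r, Cmult_0_l in Hid; apply C1_nz, eq_sym, Hid).
  assert (HC : Cxy = (1 - Q / P)%C).
  { transitivity (1 - (P / Q * (1 - Cxy)) * Q / P)%C; [field; split; assumption|].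
    rewrite Hid. field. exact HP. }
  rewrite HC. unfold Q, P, cinner.
  rewrite (CSeries_finite _ d) by (intros n Hn; rewrite (proj1 (Hb _ Hx)) by lia; ring).
  rewrite !sum_n_Sl.
  rewrite (sum_nC_ext (fun k => (lfactor (S (S k)) x * rfactor (S (S k)) y)%C)
    (fun n => (b x n * Cconj (b y n) * (/ delta x * Cconj (/ delta y)))%C)).
  2:{ intros n _. simpl. rewrite Cdiv_conj, Cinv_conj by (apply Hdelta; assumption).
      field. split; [apply Cconj_neq_0|]; apply Hdelta; assumption. }
  rewrite sum_nC_mult_r. simpl lfactor. simpl rfactor.
  repeat change (plus ?a ?b) with (Cplus a b).
  rewrite Cinv_conj by (apply Hdelta; assumption).
  field. split; [apply Cconj_neq_0|]; apply Hdelta; assumption.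
Qed.

Lemma finite_embedding_ccoef_eventually_zero : exists M, forall n, (M <= n)%nat -> ccoef s n = 0.
Proof.
  apply (finite_rank_eventually_zero _ _ lfactor rfactor PSeries_ccoef_finite_rank 1).
  intro n. apply Rabs_ccoef_le_1, Hs.
Qed.

End FiniteEmbedding.

Lemma no_finite_embedding s d : s < 0 -> ~ has_embedding s (Some d).
Proof.
  intros Hs [b [delta [Hb [Hdelta Hk]]]]. apply (ccoef_not_eventually_zero s Hs).
  apply (finite_embedding_ccoef_eventually_zero s d b delta); auto. lra.
Qed.

Theorem theorem1p11 :
  emb_dim_is 0 (Some 1%nat) /\ (forall s : R, s < 0 -> emb_dim_is s None).
Proof.
  split; [exact emb_dim_is_0_1|].
  intros s Hs. split; [apply has_embedding_l2; lra|].
  intro d. apply no_finite_embedding, Hs.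
Qed.
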